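(* Let $\theta>0$, $\lambda>0$, $\mu>0$, $e\ge 0$. Let $$\pi(\alpha,d)=(\theta+\mu)\alpha-\frac{\alpha^2}{2}-\frac{\alpha}{\alpha+d}\lambda\alpha\theta-d,$$ and let $d^*(\alpha)$ be the firm's privately optimal security investment, $d^*(\alpha)=0$ if $\lambda\theta\le1$ and $d^*(\alpha)=\alpha(\sqrt{\lambda\theta}-1)$ if $\lambda\theta>1$. Define $$W_{SB}(\alpha)=\pi(\alpha,d^*(\alpha))-e\,\frac{\alpha}{\alpha+d^*(\alpha)}\,\lambda\alpha\theta .$$ Then the maximizer of $W_{SB}$ over $\alpha\ge 0$ (second-best deployment) is $$\alpha^{**}_{SB}(\theta)=\max\!\left\{0,\;\begin{cases}\mu+\theta\big(1-(1+e)\lambda\big), & \lambda\theta\le 1,\\ \theta+\mu+1-(2+e)\sqrt{\lambda\theta}, & \lambda\theta>1.\end{cases}\right\}$$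
   Context: A regulator chooses deployment $\alpha$ while the firm privately chooses security investment $d$ to maximize $\pi(\alpha,\cdot)$. $\theta$ is capability, $\lambda$ breach-loss magnitude, $\mu$ organizational readiness, $e$ the breach externality parameter (social breach damage is $(1+e)$ times private expected loss $\frac{\alpha}{\alpha+d}\lambda\alpha\theta$). *)

From Stdlib Require Import Reals.
Open Scope R_scope.

Definition profit (theta lambda mu alpha d : R) : R :=
  (theta + mu) * alpha - alpha ^ 2 / 2
  - (alpha / (alpha + d)) * lambda * alpha * theta - d.

Definition dstar (theta lambda alpha : R) : R :=
  if Rle_dec (lambda * theta) 1 then 0
  else alpha * (sqrt (lambda * theta) - 1).

Definition W_SB (theta lambda mu e alpha : R) : R :=
  let d := dstar theta lambda alpha in
  profit theta lambda mu alpha d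
  - e * (alpha / (alpha + d)) * lambda * alpha * theta.

Definition alpha_SB (theta lambda mu e : R) : R :=
  Rmax 0 (if Rle_dec (lambda * theta) 1
          then mu + theta * (1 - (1 + e) * lambda)
          else theta + mu + 1 - (2 + e) * sqrt (lambda * theta)).

(** Under the firm's best response the breach probability [alpha / (alpha + dstar)]
    is the constant [1] or [1 / sqrt (lambda theta)], so expected breach loss and
    security spending are both linear in [alpha]. Second-best welfare therefore
    collapses to the concave parabola [K alpha - alpha^2 / 2], with [K] the
    slope inside [alpha_SB], whose unique maximizer on [alpha >= 0] is
    [max 0 K]. *)
From Stdlib Require Import Reals Lra Psatz.
Open Scope R_scope.

Definition welfare_slope (theta lambda mu e : R) : R :=
  if Rle_dec (lambda * theta) 1
  then mu + theta * (1 - (1 + e) * lambda)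
  else theta + mu + 1 - (2 + e) * sqrt (lambda * theta).

Lemma alpha_SB_Rmax_slope (theta lambda mu e : R) :
  alpha_SB theta lambda mu e = Rmax 0 (welfare_slope theta lambda mu e).
Proof. reflexivity. Qed.

(* Also valid at [a = 0], where both sides are [0] because [0 / 0 = 0]. *)
Lemma Rdiv_mul_scaled (a c : R) : c <> 0 -> a / (a * c) * a = a / c.
Proof.
  intros Hc; destruct (Req_dec a 0) as [-> | Ha].
  - unfold Rdiv; ring.
  - field; auto.
Qed.

Lemma W_SB_expanded (theta lambda mu e alpha : R) :
  W_SB theta lambda mu e alpha =
  (theta + mu) * alpha - alpha ^ 2 / 2
  - (1 + e) * (alpha / (alpha + dstar theta lambda alpha) * alpha) * (lambda * theta)
  - dstar theta lambda alpha.
Proof. unfold W_SB, profit; ring. Qed.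

Lemma W_SB_quadratic (theta lambda mu e alpha : R) :
  W_SB theta lambda mu e alpha =
  welfare_slope theta lambda mu e * alpha - alpha ^ 2 / 2.
Proof.
  rewrite W_SB_expanded; unfold dstar, welfare_slope.
  destruct (Rle_dec (lambda * theta) 1) as [Hlow | Hhigh].
  - replace (alpha + 0) with (alpha * 1) by ring.
    rewrite Rdiv_mul_scaled by lra; field.
  - set (s := sqrt (lambda * theta)).
    assert (Hss : s * s = lambda * theta) by (apply sqrt_sqrt; lra).
    assert (Hs : 1 < s).
    { rewrite <- sqrt_1; apply sqrt_lt_1; lra. }
    replace (alpha + alpha * (s - 1)) with (alpha * s) by ring.
    rewrite Rdiv_mul_scaled by lra; rewrite <- Hss; field; lra.
Qed.

Section ConcaveParabola.

Variable K : R.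

Let q (a : R) : R := K * a - a ^ 2 / 2.
Let m : R := Rmax 0 K.

(* The gap is [(a - m)^2 / 2 + (a - m) (m - K)], and the second term is
   nonnegative: it vanishes when [m = K] and equals [- K a] when [m = 0]. *)
Lemma parabola_gap_Rmax0 (a : R) : 0 <= a -> (a - m) ^ 2 / 2 <= q m - q a.
Proof.
  intros Ha; unfold q, m.
  destruct (Rle_dec K 0) as [HK | HK].
  - rewrite Rmax_left by lra; nra.
  - rewrite Rmax_right by lra; lra.
Qed.

Lemma parabola_le_Rmax0 (a : R) : 0 <= a -> q a <= q m.
Proof.
  intros Ha; pose proof (parabola_gap_Rmax0 a Ha); pose proof (pow2_ge_0 (a - m)).
  lra.
Qed.

Lemma parabola_eq_Rmax0 (a : R) : 0 <= a -> q a = q m -> a = m.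
Proof. intros Ha Heq; pose proof (parabola_gap_Rmax0 a Ha); nra. Qed.

End ConcaveParabola.

Theorem proposition7 (theta lambda mu e : R)
  (Htheta : 0 < theta) (Hlambda : 0 < lambda) (Hmu : 0 < mu) (He : 0 <= e) :
  0 <= alpha_SB theta lambda mu e /\
  (forall alpha, 0 <= alpha ->
     W_SB theta lambda mu e alpha <= W_SB theta lambda mu e (alpha_SB theta lambda mu e)) /\
  (forall alpha, 0 <= alpha ->
     W_SB theta lambda mu e alpha = W_SB theta lambda mu e (alpha_SB theta lambda mu e) ->
     alpha = alpha_SB theta lambda mu e).
Proof.
  rewrite alpha_SB_Rmax_slope; repeat split.
  - apply Rmax_l.
  - intros alpha Ha; rewrite !W_SB_quadratic; now apply parabola_le_Rmax0.
  - intros alpha Ha; rewrite !W_SB_quadratic; now apply parabola_eq_Rmax0.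
Qed.
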